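(* For all agents $a$, messages $M,M'$ and formulas $\phi,\psi$, the following formulas are valid: (1) $\mathsf{k}_a(a)$; (2) $(\mathsf{k}_a(M)\wedge\mathsf{k}_a(M'))\leftrightarrow\mathsf{k}_a((M,M'))$; (3) $[M]\mathsf{k}_{\mathsf{CM}}(M)$; (4) $[M](\phi\to\psi)\to([M]\phi\to[M]\psi)$; (5) $[M]\phi\to(\mathsf{k}_{\mathsf{CM}}(M)\to\phi)$; (6) $[M]\phi\to\langle M\rangle\phi$; (7) $\phi\to[M]\phi$. Moreover (8) if $\phi$ is valid then $[M]\phi$ is valid, and (9) if $\mathsf{k}_{\mathsf{CM}}(M)\to\mathsf{k}_{\mathsf{CM}}(M')$ is valid then $[M']\phi\to[M]\phi$ is valid.
   Context: Syntax. Fix a finite set $\mathcal{A}$ of agent names containing a distinguished name $\mathsf{CM}$. Messages: $M ::= a \mid B \mid (M,M)$ ($a\in\mathcal{A}$, $B$ optional data constants, pairs). $\mathcal{P}$ is a denumerable set of propositional variables containing atoms $\mathsf{k}_a(M)$. Formulas: $\phi ::= P \mid \phi\wedge\phi \mid \phi\vee\phi \mid \neg\phi \mid \phi\to\phi \mid [M]\phi$. Abbreviations: $\phi\leftrightarrow\psi:=(\phi\to\psi)\wedge(\psi\to\phi)$, $\langle M\rangle\phi:=\neg\neg(\mathsf{k}_{\mathsf{CM}}(M)\wedge\phi)$. Semantics. An LIiP-model is $(\mathcal{S},\sqsubseteq,\{R_M\}_M,\{D_a\}_{a\in\mathcal{A}},\mathcal{V})$ with $\mathcal{S}$ a nonempty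 set of states, $\sqsubseteq$ a partial order, $D_a(s)$ a set of messages per agent and state, $\mathrm{cl}_a(s)$ the smallest set of messages containing $a$ and $D_a(s)$ closed under pairing and taking components of pairs. $\mathcal{V}:\mathcal{P}\to 2^{\mathcal{S}}$ satisfies $\mathcal{V}(\mathsf{k}_a(M))=\{s: M\in\mathrm{cl}_a(s)\}$ and is upward closed along $\sqsubseteq$. $M\preceq M'$ iff for all $s$, $M\in\mathrm{cl}_{\mathsf{CM}}(s)$ implies $M'\in\mathrm{cl}_{\mathsf{CM}}(s)$. The $R_M$ satisfy: (i) $sR_Ms'$ implies $M\in\mathrm{cl}_{\mathsf{CM}}(s')$; (ii) $M\in\mathrm{cl}_{\mathsf{CM}}(s)$ implies $sR_Ms$; (iii) every $s$ has some $s'$ with $sR_Ms'$; (iv) $R_M\subseteq R_{\mathsf{CM}}={\sqsubseteq}$; (v) $sR_{\mathsf{CM}}t$ and $tR_Mu$ imply $sR_Mu$; (vi) $M\preceq M'$ implies $R_M\subseteq R_{M'}$. Satisfaction: atoms via $\mathcal{V}$; $\wedge,\vee$ classically; $s\models\neg\phi$ iff no $s'\sqsupseteq s$ satisfies $\phi$; $s\models\phi\to\psi$ iff every $s'\sqsupseteq s$ satisfying $\phi$ satisfies $\psi$; $s\models[M]\phi$ iff every $s'$ with $sR_Ms'$ satisfies $\phi$. Valid: true at every state of every LIiP-model. *)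

From mathcomp Require Import all_boot.
Set Implicit Arguments. Unset Strict Implicit. Unset Printing Implicit Defensive.

Section LIiP.
Variables (Agent : finType) (CM : Agent) (Data : Type).

Inductive msg : Type :=
| MAgent : Agent -> msg
| MData : Data -> msg
| MPair : msg -> msg -> msg.

Inductive pvar : Type :=
| PK : Agent -> msg -> pvar
| PVar : nat -> pvar.

Inductive form : Type :=
| FAtom : pvar -> form
| FAnd : form -> form -> form
| FOr : form -> form -> form
| FNeg : form -> form
| FImp : form -> form -> form
| FBox : msg -> form -> form.

Definition Fk (a : Agent) (M : msg) : form := FAtom (PK a M).
Definition FIff (p q : form) : form := FAnd (FImp p q) (FImp q p).
Definition FDia (M : msg) (p : form) : form :=
  FNeg (FNeg (FAnd (Fk CM M) p)).

Inductive cl (D : msg -> Prop) (a : Agent) : msg -> Prop :=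
| cl_self : cl D a (MAgent a)
| cl_D : forall m, D m -> cl D a m
| cl_pair : forall m1 m2, cl D a m1 -> cl D a m2 -> cl D a (MPair m1 m2)
| cl_fst : forall m1 m2, cl D a (MPair m1 m2) -> cl D a m1
| cl_snd : forall m1 m2, cl D a (MPair m1 m2) -> cl D a m2.

Record model : Type := Model {
  St : Type;
  St_inhabited : inhabited St;
  le : St -> St -> Prop;
  le_refl : forall s, le s s;
  le_trans : forall s t u, le s t -> le t u -> le s u;
  le_antisym : forall s t, le s t -> le t s -> s = t;
  Rm : msg -> St -> St -> Prop;
  Dm : Agent -> St -> msg -> Prop;
  Val : pvar -> St -> Prop;
  Val_k : forall a M s, Val (PK a M) s <-> cl (Dm a s) a M;
  Val_up : forall p s t, le s t -> Val p s -> Val p t;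
  R_i : forall M s t, Rm M s t -> cl (Dm CM t) CM M;
  R_ii : forall M s, cl (Dm CM s) CM M -> Rm M s s;
  R_iii : forall M s, exists t, Rm M s t;
  R_CM : forall s t, Rm (MAgent CM) s t <-> le s t;
             R_iv : forall M s t, Rm M s t -> Rm (MAgent CM) s t;
  R_v : forall M s t u, Rm (MAgent CM) s t -> Rm M t u -> Rm M s u;
  R_vi : forall M M',
     (forall s, cl (Dm CM s) CM M -> cl (Dm CM s) CM M') ->
     forall s t, Rm M s t -> Rm M' s t
}.

Fixpoint sat (K : model) (s : St K) (f : form) {struct f} : Prop :=
  match f with
  | FAtom p => @Val K p s
  | FAnd p q => @sat K s p /\ @sat K s q
  | FOr p q => @sat K s p \/ @sat K s q
  | FNeg p => forall t, @le K s t -> ~ @sat K t p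
  | FImp p q => forall t, @le K s t -> @sat K t p -> @sat K t q
  | FBox M p => forall t, @Rm K M s t -> @sat K t p
  end.

Definition valid (f : form) : Prop := forall (K : model) (s : St K), @sat K s f.

End LIiP.

(* Every clause is read off the frame conditions.  The only non-local ingredient
   is persistence: truth is upward closed along the information order, because
   atoms are, implication and negation quantify over all extensions, and by (v)
   every R_M-successor of an extension is an R_M-successor of the original state.
   Persistence gives (7), since R_M-successors extend the current state by (iv);
   (5) is (ii), (3) is (i), (6) combines (i), (iii) and (iv), and (9) is (vi). *)
From mathcomp Require Import all_boot.

Section Semantics.
Context {Agent : finType} {CM : Agent} {Data : Type} {K : model CM Data}.

Lemma le_RCM {s t : St K} : le s t -> Rm (MAgent Data CM) s t.
Proof. by move=> Hst; apply/R_CM. Qed.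

Lemma Rm_le {M : msg Agent Data} {s t : St K} : Rm M s t -> le s t.
Proof. by move=> Hst; apply/R_CM; apply: R_iv Hst. Qed.

Lemma le_Rm_trans {M : msg Agent Data} {s t u : St K} :
  le s t -> Rm M t u -> Rm M s u.
Proof. by move=> Hst; apply: R_v (le_RCM Hst). Qed.

Lemma sat_le (f : form Agent Data) {s t : St K} : le s t -> sat s f -> sat t f.
Proof.
elim: f s t => [p|p IHp q IHq|p IHp q IHq|p IHp|p IHp q IHq|M p IHp] s t Hst /=.
- exact: Val_up.
- by case=> Hp Hq; split; [apply: IHp Hp|apply: IHq Hq].
- by case=> [Hp|Hq]; [left; apply: IHp Hp|right; apply: IHq Hq].
- by move=> H u Htu; apply: H; apply: le_trans Htu.
- by move=> H u Htu; apply: H; apply: le_trans Htu.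
- by move=> H u Htu; apply: H; apply: le_Rm_trans Htu.
Qed.

End Semantics.

Section Validities.
Context {Agent : finType} {CM : Agent} {Data : Type}.
Implicit Types (a : Agent) (M : msg Agent Data) (phi psi : form Agent Data).

Lemma valid_k_self a : valid CM (Fk a (MAgent Data a)).
Proof. by move=> K s; apply/Val_k; apply: cl_self. Qed.

Lemma valid_k_pair a M M' :
  valid CM (FIff (FAnd (Fk a M) (Fk a M')) (Fk a (MPair M M'))).
Proof.
move=> K s /=; split=> t _.
- by case=> /Val_k HM /Val_k HM'; apply/Val_k; apply: cl_pair.
- by move/Val_k=> HMM'; split; apply/Val_k; [apply: cl_fst HMM'|apply: cl_snd HMM'].
Qed.

Lemma valid_box_k M : valid CM (FBox M (Fk CM M)).
Proof. by move=> K s t Hst; apply/Val_k; apply: R_i Hst. Qed.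

Lemma valid_box_distr M phi psi :
  valid CM (FImp (FBox M (FImp phi psi)) (FImp (FBox M phi) (FBox M psi))).
Proof.
move=> K s /= t _ Himp t' Htt' Hphi u Hu.
apply: Himp (le_refl _) (Hphi u Hu); exact: le_Rm_trans Htt' Hu.
Qed.

Lemma valid_box_k_imp M phi : valid CM (FImp (FBox M phi) (FImp (Fk CM M) phi)).
Proof.
move=> K s /= t _ Hbox t' Htt' /Val_k HM.
by apply: Hbox; apply: le_Rm_trans Htt' (R_ii HM).
Qed.

Lemma valid_box_dia M phi : valid CM (FImp (FBox M phi) (FDia CM M phi)).
Proof.
move=> K s /= t _ Hbox t' Htt' Hneg.
have [u Hu] := R_iii M t'.
apply: (Hneg u (Rm_le Hu)); split.
- by apply/Val_k; apply: R_i Hu.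
- by apply: Hbox; apply: le_Rm_trans Htt' Hu.
Qed.

Lemma valid_imp_box M phi : valid CM (FImp phi (FBox M phi)).
Proof. by move=> K s /= t _ Hphi u Hu; apply: sat_le (Rm_le Hu) Hphi. Qed.

Lemma valid_box_nec M phi : valid CM phi -> valid CM (FBox M phi).
Proof. by move=> Hphi K s t _; apply: Hphi. Qed.

Lemma valid_box_antimono M M' phi :
  valid CM (FImp (Fk CM M) (Fk CM M')) -> valid CM (FImp (FBox M' phi) (FBox M phi)).
Proof.
move=> Himp K s /= t _ Hbox u Hu; apply: Hbox; apply: R_vi Hu => s' /Val_k HM.
by apply/Val_k; apply: Himp (le_refl _) HM.
Qed.

End Validities.

Theorem proposition4 (Agent : finType) (CM : Agent) (Data : Type) :
  (forall a : Agent, valid CM (Fk a (MAgent Data a))) /\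
  (forall (a : Agent) (M M' : msg Agent Data),
      valid CM (FIff (FAnd (Fk a M) (Fk a M')) (Fk a (MPair M M')))) /\
  (forall M : msg Agent Data, valid CM (FBox M (Fk CM M))) /\
  (forall (M : msg Agent Data) (phi psi : form Agent Data),
      valid CM (FImp (FBox M (FImp phi psi)) (FImp (FBox M phi) (FBox M psi)))) /\
  (forall (M : msg Agent Data) (phi : form Agent Data),
      valid CM (FImp (FBox M phi) (FImp (Fk CM M) phi))) /\
  (forall (M : msg Agent Data) (phi : form Agent Data),
      valid CM (FImp (FBox M phi) (FDia CM M phi))) /\
  (forall (M : msg Agent Data) (phi : form Agent Data),
      valid CM (FImp phi (FBox M phi))) /\
  (forall (M : msg Agent Data) (phi : form Agent Data),
      valid CM phi -> valid CM (FBox M phi)) /\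
  (forall (M M' : msg Agent Data) (phi : form Agent Data),
      valid CM (FImp (Fk CM M) (Fk CM M')) ->
      valid CM (FImp (FBox M' phi) (FBox M phi))).
Proof.
exact: (conj valid_k_self (conj valid_k_pair (conj valid_box_k
  (conj valid_box_distr (conj valid_box_k_imp (conj valid_box_dia
  (conj valid_imp_box (conj valid_box_nec valid_box_antimono)))))))).
Qed.
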